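(* On the noncommutative space $\mathbb{R}^4_\theta$ described in the context, the pair $(\nabla,\sigma)$, where $\nabla:\Omega^1_A\to\Omega^1_A\otimes_A\Omega^1_A$ is given by $\nabla(\sum_ia_i\,\mathrm{d}z^i)=\sum_i\mathrm{d}a_i\otimes_A\mathrm{d}z^i$ (i.e. $\nabla(\mathrm{d}z^i)=0$ plus the left Leibniz rule) and $\sigma:\Omega^1_A\otimes_A\Omega^1_A\to\Omega^1_A\otimes_A\Omega^1_A$ is the left $A$-linear map with $\sigma(\mathrm{d}z^i\otimes_A\mathrm{d}z^j)=R^{ji}\,\mathrm{d}z^j\otimes_A\mathrm{d}z^i$, is a bimodule connection on $\Omega^1_A$.
   Context: Let $\theta\in\mathbb{R}$ and $R=(R^{ab})$ the $4\times4$ matrix (row $a$, column $b$) with rows $(1,e^{-i\theta},1,e^{i\theta})$, $(e^{i\theta},1,e^{-i\theta},1)$, $(1,e^{i\theta},1,e^{-i\theta})$, $(e^{-i\theta},1,e^{i\theta},1)$. Let $A=\mathbb{C}\langle z^1,\dots,z^4\rangle/(z^iz^j-R^{ji}z^jz^i)$, $\Omega^1_A=\bigoplus_{i=1}^4A\,\mathrm{d}z^i$ the free left $A$-module with right action determined by $\mathrm{d}z^i\,z^j=R^{ji}z^j\,\mathrm{d}z^i$, and $\mathrm{d}:A\to\Omega^1_A$ with $z^i\mapsto\mathrm{d}z^i$ extended by the Leibniz rule. A bimodule connection on an $A$-bimodule $V$ is a pair $(\nabla,\sigma)$ of a linear map $\nabla:V\to\Omega^1_A\otimes_AV$ and an $A$-bimodule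 isomorphism $\sigma:V\otimes_A\Omega^1_A\to\Omega^1_A\otimes_AV$ with $\nabla(av)=a\nabla(v)+\mathrm{d}a\otimes_Av$ and $\nabla(va)=\nabla(v)a+\sigma(v\otimes_A\mathrm{d}a)$ for all $a\in A$, $v\in V$. *)

From HB Require Import structures.
From mathcomp Require Import all_boot all_order all_algebra.
From mathcomp Require Import complex Rstruct mpoly.
From Stdlib Require Rtrigo_def.

Set Implicit Arguments.
Unset Strict Implicit.
Unset Printing Implicit Defensive.

Import GRing.Theory Num.Theory.
Local Open Scope ring_scope.

Definition Cx := complex Rdefinitions.R.

Definition expi (t : Rdefinitions.R) : Cx :=
  (Rtrigo_def.cos t +i* Rtrigo_def.sin t)%C.

(* Indices: z^1,...,z^4 are indexed by the ordinals 0,1,2,3 of 'I_4. *)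

(* The matrix R = (R^{ab}) (row a, column b) of the paper:
   rows (1,e^{-it},1,e^{it}), (e^{it},1,e^{-it},1),
        (1,e^{it},1,e^{-it}), (e^{-it},1,e^{it},1). *)
Definition Rnat (theta : Rdefinitions.R) (a b : nat) : Cx :=
  match a, b with
  | 0, 1 => expi (- theta)%R | 0, 3 => expi theta
  | 1, 0 => expi theta       | 1, 2 => expi (- theta)%R
  | 2, 1 => expi theta       | 2, 3 => expi (- theta)%R
  | 3, 0 => expi (- theta)%R | 3, 2 => expi theta
  | _, _ => 1
  end.

Definition Rmx (theta : Rdefinitions.R) : 'M[Cx]_4 :=
  \matrix_(a < 4, b < 4) Rnat theta a b.

Section Rtheta.
Variable theta : Rdefinitions.R.
Local Notation R := (Rmx theta).

(* The algebra A = C<z^1,..,z^4>/(z^i z^j - R^{ji} z^j z^i),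
   realised on its PBW basis of ordered monomials
   z^m = (z^1)^{m_1}(z^2)^{m_2}(z^3)^{m_3}(z^4)^{m_4}.
   The underlying C-vector space is that of {mpoly Cx[4]} (finitely
   supported coefficient functions on monomials); the product is the
   twisted product  z^m z^n = tw m n z^{m+n},  where
   tw m n = prod_{j<i} (R^{ji})^{m_i n_j}  (obtained by moving every z^j of
   z^n to the left past every z^i of z^m with i > j, using
   z^i z^j = R^{ji} z^j z^i). *)
Definition A := {mpoly Cx[4]}.

Definition tw (m n : 'X_{1..4}) : Cx :=
  \prod_(i < 4) \prod_(j < 4 | (j < i)%N) R j i ^+ (m i * n j).

Definition mulA (a b : A) : A :=
  \sum_(m <- msupp a) \sum_(n <- msupp b)
     (a@_m * b@_n * tw m n) *: 'X_[(m + n)%MM].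

Definition zA (i : 'I_4) : A := 'X_i.

(* Omega^1_A = (+)_i A dz^i, the free left A-module; an element
   sum_i a_i dz^i is represented by its coefficient function i |-> a_i. *)
Definition Omega1 := {ffun 'I_4 -> A}.

Definition dz (i : 'I_4) : Omega1 := [ffun j => if j == i then 1 else 0].

Definition lact1 (a : A) (w : Omega1) : Omega1 := [ffun i => mulA a (w i)].

(* The right action determined by dz^i z^j = R^{ji} z^j dz^i is
   dz^i a = phi_i(a) dz^i, where phi_i is the algebra automorphism with
   phi_i(z^j) = R^{ji} z^j, i.e. phi_i(z^m) = prod_j (R^{ji})^{m_j} z^m. *)
Definition phi (i : 'I_4) (a : A) : A :=
  \sum_(m <- msupp a) (a@_m * \prod_(j < 4) R j i ^+ m j) *: 'X_[m].

Definition ract1 (w : Omega1) (a : A) : Omega1 :=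
  [ffun i => mulA (w i) (phi i a)].

(* Since Omega^1_A is free as a left module on
   the dz^i and dz^i a = phi_i(a) dz^i with phi_i invertible, the balanced
   tensor product is the free left A-module on the dz^i (x) dz^j; an
   element sum_{ij} a_{ij} dz^i (x) dz^j is represented by (i,j) |-> a_{ij}. *)
Definition Omega2 := {ffun 'I_4 * 'I_4 -> A}.

(* (sum_i w_i dz^i) (x)_A (sum_j v_j dz^j) = sum_{ij} w_i phi_i(v_j) dz^i (x) dz^j *)
Definition tens (w v : Omega1) : Omega2 :=
  [ffun ij => mulA (w ij.1) (phi ij.1 (v ij.2))].

(* bimodule structure on Omega^1 (x)_A Omega^1:
   a (w (x) v) = (a w) (x) v  and  (w (x) v) a = w (x) (v a) *)
Definition lact2 (a : A) (x : Omega2) : Omega2 := [ffun ij => mulA a (x ij)].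
Definition ract2 (x : Omega2) (a : A) : Omega2 :=
  [ffun ij => mulA (x ij) (phi ij.1 (phi ij.2 a))].

Definition is_dA (d : A -> Omega1) : Prop :=
  [/\ forall a b, d (a + b) = d a + d b,
      forall (c : Cx) a, d (c *: a) = c *: d a,
      forall i, d (zA i) = dz i &
      forall a b, d (mulA a b) = ract1 (d a) b + lact1 a (d b)].

Definition nablaO (d : A -> Omega1) (w : Omega1) : Omega2 :=
  \sum_(i < 4) tens (d (w i)) (dz i).

Definition sigmaO (x : Omega2) : Omega2 :=
  \sum_(i < 4) \sum_(j < 4) lact2 (x (i, j)) (R j i *: tens (dz j) (dz i)).

(* Bimodule connection on the A-bimodule V = Omega^1_A (so that
   V (x)_A Omega^1 and Omega^1 (x)_A V are both Omega2 above). *)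
Definition bimodule_connection (d : A -> Omega1)
    (nabla : Omega1 -> Omega2) (sigma : Omega2 -> Omega2) : Prop :=
  [/\
      (forall v w, nabla (v + w) = nabla v + nabla w) /\
      (forall (c : Cx) v, nabla (c *: v) = c *: nabla v),
      [/\ forall x y, sigma (x + y) = sigma x + sigma y,
          forall a x, sigma (lact2 a x) = lact2 a (sigma x),
          forall x a, sigma (ract2 x a) = ract2 (sigma x) a &
          bijective sigma],
      forall a v, nabla (lact1 a v) = lact2 a (nabla v) + tens (d a) v &
      forall v a, nabla (ract1 v a) = ract2 (nabla v) a + sigma (tens v (d a))].

End Rtheta.

From Pilot Require Import Defs.
From HB Require Import structures.
From mathcomp Require Import all_boot all_order all_algebra.
From mathcomp Require Import complex Rstruct mpoly ssrcomplements.
From Stdlib Require Rtrigo1.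

Set Implicit Arguments.
Unset Strict Implicit.
Unset Printing Implicit Defensive.

Import GRing.Theory Num.Theory.
Local Open Scope ring_scope.

(* In the coordinates of Omega^1 (x)_A Omega^1, the free left module on the
   dz^k (x) dz^l, nabla w has (k,l)-entry (d w_l)_k and sigma x has (k,l)-entry
   R^{kl} x_{lk}.  So nabla is linear and satisfies the left Leibniz rule, and
   sigma is a bimodule map (the automorphisms phi_k commute) and an involution
   (R^{kl} R^{lk} = 1).  The right Leibniz rule amounts to the twisted
   commutation (d (phi_l a))_k = R^{kl} phi_l ((d a)_k) of d with the
   automorphisms phi_l that implement the right action: the set of a for which
   it holds contains 1 and the z^i and is closed under sums, scalars and
   products, hence is all of A. *)

Section LinearExtension.
Variables (n : nat) (K : nzRingType) (V : lmodType K) (f : 'X_{1..n} -> V).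

Definition mlin (p : {mpoly K[n]}) : V := \sum_(m <- msupp p) p@_m *: f m.

Lemma mlinwE (k : nat) (p : {mpoly K[n]}) :
  leq (msize p) k -> mlin p = \sum_(m : 'X_{1..n < k}) p@_m *: f m.
Proof.
move=> le_pk; rewrite /mlin (big_mksub 'X_{1..n < k}) ?msupp_uniq //=; last first.
  by move=> m /msize_mdeg_lt /leq_trans; apply.
by rewrite big_rmcond //= => m /memN_msupp_eq0 ->; rewrite scale0r.
Qed.

Lemma mlin_is_linear : linear mlin.
Proof.
move=> c p q; pose k := maxn (msize p) (msize q).
have le_pk : leq (msize p) k by rewrite leq_max leqnn.
have le_qk : leq (msize q) k by rewrite leq_max leqnn orbT.
have le_cpqk : leq (msize (c *: p + q)) k.
  by rewrite (leq_trans (msizeD_le _ _)) // geq_max (leq_trans (msizeZ_le _ _)).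
rewrite !(mlinwE (k := k)) // scaler_sumr -big_split; apply: eq_bigr => m _.
by rewrite mcoeffD mcoeffZ scalerDl scalerA.
Qed.

Lemma mlinX m : mlin 'X_[m] = f m.
Proof. by rewrite /mlin msuppX big_seq1 mcoeffX eqxx scale1r. Qed.

End LinearExtension.

HB.instance Definition _ n (K : nzRingType) (V : lmodType K) (f : 'X_{1..n} -> V) :=
  GRing.isLinear.Build K {mpoly K[n]} V *:%R (mlin f) (mlin_is_linear f).

Lemma eq_mlin n (K : nzRingType) (V : lmodType K) (f g : 'X_{1..n} -> V) :
  f =1 g -> mlin f =1 mlin g.
Proof. by move=> fg p; apply: eq_bigr => m _; rewrite fg. Qed.

Lemma mlin_mpolyX n (K : nzRingType) (p : {mpoly K[n]}) :
  mlin (fun m => 'X_[m]) p = p.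
Proof. by rewrite [RHS]mpolyE. Qed.

Lemma mnm_ind n (P : 'X_{1..n} -> Prop) :
  P 0%MM -> (forall m i, P m -> P (m + U_(i))%MM) -> forall m, P m.
Proof.
move=> P0 PS m; elim: {m}(mdeg m) {-2}m (erefl (mdeg m)) => [|N IH] m hm.
  by move/eqP: hm; rewrite mdeg_eq0 => /eqP ->.
have [i Ui_le_m] : exists i, (U_(i) <= m)%MM.
  apply/existsP; apply: contraT; rewrite negb_exists => /forallP m0.
  suff m_eq0 : m = 0%MM by move: hm; rewrite m_eq0 mdeg0.
  by apply/mnmP => i; rewrite mnm0E; apply/eqP; rewrite -[_ == _]negbK -lep1mP m0.
rewrite -(submK Ui_le_m); apply/PS/IH.
by move: hm; rewrite -{1}(submK Ui_le_m) mdegD mdeg1 addn1 => -[].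
Qed.

Lemma mpoly_lin_ind n (K : nzRingType) (P : {mpoly K[n]} -> Prop) :
  P 0 -> (forall c p, P p -> P (c *: p)) -> (forall p q, P p -> P q -> P (p + q)) ->
  (forall m, P 'X_[m]) -> forall p, P p.
Proof.
move=> P0 PZ PD PX; elim/mpolyind => // c m p _ _ Pp.
by apply/PD/Pp/PZ/PX.
Qed.

Lemma expi_mulN (t : Rdefinitions.R) : expi t * expi (- t)%R = 1.
Proof.
rewrite /expi Rtrigo1.cos_neg Rtrigo1.sin_neg.
apply/eqP; rewrite eq_complex /=; apply/andP; split; apply/eqP.
  by rewrite !RoppE mulrN opprK addrC; exact: Rtrigo1.sin2_cos2.
by rewrite !RoppE mulrN mulrC addNr.
Qed.

Section TwistedAlgebra.
Variable theta : Rdefinitions.R.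
Local Notation R := (Rmx theta).
Local Notation tw := (Defs.tw theta).
Local Notation mulA := (Defs.mulA theta).
Local Notation phi := (Defs.phi theta).
Local Notation tens := (Defs.tens theta).
Local Notation lact1 := (Defs.lact1 theta).
Local Notation ract1 := (Defs.ract1 theta).
Local Notation lact2 := (Defs.lact2 theta).
Local Notation ract2 := (Defs.ract2 theta).
Local Notation sigma := (sigmaO theta).

Lemma Rmx_mul_sym (k l : 'I_4) : R k l * R l k = 1.
Proof.
rewrite !mxE; case: k => [[|[|[|[|k]]]] ?] //; case: l => [[|[|[|[|l]]]] ?] //=;
  by rewrite ?mulr1 ?expi_mulN // mulrC expi_mulN.
Qed.

Lemma Rmx_neq0 (k l : 'I_4) : R k l != 0.
Proof.
by apply: contra_eq_neq (Rmx_mul_sym k l) => ->; rewrite mul0r eq_sym oner_neq0.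
Qed.

Lemma tw_neq0 m n : tw m n != 0.
Proof.
by apply/prodf_neq0 => i _; apply/prodf_neq0 => j _; rewrite expf_neq0 ?Rmx_neq0.
Qed.

Lemma tw0m m : tw 0%MM m = 1.
Proof. by apply: big1 => i _; apply: big1 => j _; rewrite mnm0E mul0n expr0. Qed.

Lemma twm0 m : tw m 0%MM = 1.
Proof. by apply: big1 => i _; apply: big1 => j _; rewrite mnm0E muln0 expr0. Qed.

Lemma mulA_mlinl a b :
  mulA a b = mlin (fun m => mlin (fun n => tw m n *: 'X_[m + n]) b) a.
Proof.
apply: eq_bigr => m _; rewrite scaler_sumr; apply: eq_bigr => n _.
by rewrite !scalerA.
Qed.

Lemma mulA_mlinr a b :
  mulA a b = mlin (fun n => mlin (fun m => tw m n *: 'X_[m + n]) a) b.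
Proof.
rewrite /Defs.mulA exchange_big; apply: eq_bigr => n _; rewrite scaler_sumr.
by apply: eq_bigr => m _; rewrite !scalerA [a@_m * _]mulrC.
Qed.

Lemma mulADl a a' b : mulA (a + a') b = mulA a b + mulA a' b.
Proof. by rewrite !mulA_mlinl linearD. Qed.

Lemma mulADr a b b' : mulA a (b + b') = mulA a b + mulA a b'.
Proof. by rewrite !mulA_mlinr linearD. Qed.

Lemma mulAZl c a b : mulA (c *: a) b = c *: mulA a b.
Proof. by rewrite !mulA_mlinl linearZ. Qed.

Lemma mulAZr c a b : mulA a (c *: b) = c *: mulA a b.
Proof. by rewrite !mulA_mlinr linearZ. Qed.

Lemma mulA0l b : mulA 0 b = 0.
Proof. by rewrite mulA_mlinl linear0. Qed.

Lemma mulA0r a : mulA a 0 = 0.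
Proof. by rewrite mulA_mlinr linear0. Qed.

Lemma mulAX m n : mulA 'X_[m] 'X_[n] = tw m n *: 'X_[m + n].
Proof. by rewrite mulA_mlinl !mlinX. Qed.

Lemma mulA1l a : mulA 1 a = a.
Proof.
rewrite -mpolyX0 mulA_mlinl mlinX -[RHS]mlin_mpolyX; apply: eq_mlin => m.
by rewrite tw0m scale1r add0m.
Qed.

Lemma mulA1r a : mulA a 1 = a.
Proof.
rewrite -mpolyX0 mulA_mlinr mlinX -[RHS]mlin_mpolyX; apply: eq_mlin => m.
by rewrite twm0 scale1r addm0.
Qed.

Definition phi_ev (i : 'I_4) (m : 'X_{1..4}) : Cx := \prod_(j < 4) R j i ^+ m j.

Lemma phi_ev0 i : phi_ev i 0%MM = 1.
Proof. by apply: big1 => j _; rewrite mnm0E expr0. Qed.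

Lemma phi_evD i m n : phi_ev i (m + n) = phi_ev i m * phi_ev i n.
Proof. by rewrite -big_split; apply: eq_bigr => j _; rewrite mnmDE exprD. Qed.

Lemma phi_evU i l : phi_ev l U_(i) = R i l.
Proof.
rewrite /phi_ev (bigD1 i) //= big1 ?mulr1 => [|j /negbTE ji]; first by rewrite mnm1E eqxx.
by rewrite mnm1E eq_sym ji.
Qed.

Lemma phi_mlin i a : phi i a = mlin (fun m => phi_ev i m *: 'X_[m]) a.
Proof. by apply: eq_bigr => m _; rewrite scalerA. Qed.

Lemma phiD i a b : phi i (a + b) = phi i a + phi i b.
Proof. by rewrite !phi_mlin linearD. Qed.

Lemma phiZ i c a : phi i (c *: a) = c *: phi i a.
Proof. by rewrite !phi_mlin linearZ. Qed.

Lemma phi0 i : phi i 0 = 0.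
Proof. by rewrite phi_mlin linear0. Qed.

Lemma phiX i m : phi i 'X_[m] = phi_ev i m *: 'X_[m].
Proof. by rewrite phi_mlin mlinX. Qed.

Lemma phi1 i : phi i 1 = 1.
Proof. by rewrite -mpolyX0 phiX phi_ev0 scale1r. Qed.

Lemma phiC i j a : phi i (phi j a) = phi j (phi i a).
Proof.
elim/mpoly_lin_ind: a => [|c a IHa|a b IHa IHb|m].
- by rewrite !phi0.
- by rewrite !phiZ IHa.
- by rewrite !phiD IHa IHb.
- by rewrite !phiX !phiZ !phiX !scalerA mulrC.
Qed.

Lemma phiM i a b : phi i (mulA a b) = mulA (phi i a) (phi i b).
Proof.
elim/mpoly_lin_ind: a => [|c a IHa|a a' IHa IHa'|m].
- by rewrite !mulA0l phi0 mulA0l.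
- by rewrite mulAZl !phiZ mulAZl IHa.
- by rewrite mulADl !phiD mulADl IHa IHa'.
elim/mpoly_lin_ind: b => [|c b IHb|b b' IHb IHb'|n].
- by rewrite !mulA0r phi0 mulA0r.
- by rewrite mulAZr !phiZ mulAZr IHb.
- by rewrite mulADr !phiD mulADr IHb IHb'.
by rewrite mulAX !phiX phiZ mulAZl mulAZr mulAX phiX !scalerA phi_evD mulrC.
Qed.

Lemma A_ind (P : A -> Prop) :
  P 1 -> (forall i, P (zA i)) ->
  (forall c a, P a -> P (c *: a)) -> (forall a b, P a -> P b -> P (a + b)) ->
  (forall a b, P a -> P b -> P (mulA a b)) -> forall a, P a.
Proof.
move=> P1 Pz PZ PD PM; elim/mpoly_lin_ind => [|c a|a b|m]; [|exact: PZ|exact: PD|].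
  by rewrite -(scale0r 1); apply: PZ.
elim/mnm_ind: m => [|m i PXm]; first by rewrite mpolyX0.
have -> : 'X_[m + U_(i)] = (tw m U_(i))^-1 *: mulA 'X_[m] (zA i).
  by rewrite mulAX scalerA mulVf ?scale1r ?tw_neq0.
exact/PZ/PM.
Qed.

Lemma tens_dzE w j k l : tens w (dz j) (k, l) = if l == j then w k else 0.
Proof.
rewrite !ffunE.
by case: (l =P j) => _; rewrite ?phi1 ?mulA1r ?phi0 ?mulA0r.
Qed.

Lemma nablaOE d w k l : nablaO theta d w (k, l) = d (w l) k.
Proof.
rewrite sum_ffunE (eq_bigr (fun i => if i == l then d (w l) k else 0)) => [|i _].
  by rewrite -big_mkcond big_pred1_eq.
by rewrite tens_dzE eq_sym; case: eqP => // ->.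
Qed.

Lemma sigmaOE x k l : sigma x (k, l) = R k l *: x (l, k).
Proof.
rewrite sum_ffunE (eq_bigr (fun i => if i == l then R k l *: x (l, k) else 0)) => [|i _].
  by rewrite -big_mkcond big_pred1_eq.
rewrite sum_ffunE (eq_bigr (fun j => if j == k then
  (if i == l then R k l *: x (l, k) else 0) else 0)) => [|j _].
  by rewrite -big_mkcond big_pred1_eq.
rewrite ffunE ffunE tens_dzE ffunE [l == i]eq_sym [k == j]eq_sym.
by case: (i =P l) => [->|_]; case: (j =P k) => [->|_];
  rewrite ?scaler0 ?mulA0r ?mulAZr ?mulA1r.
Qed.

Lemma sigmaOD x y : sigma (x + y) = sigma x + sigma y.
Proof. by apply/ffunP => -[k l]; rewrite ffunE !sigmaOE ffunE scalerDr. Qed.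

Lemma sigmaO_lact2 a x : sigma (lact2 a x) = lact2 a (sigma x).
Proof. by apply/ffunP => -[k l]; rewrite sigmaOE !ffunE sigmaOE mulAZr. Qed.

Lemma sigmaO_ract2 x a : sigma (ract2 x a) = ract2 (sigma x) a.
Proof. by apply/ffunP => -[k l]; rewrite sigmaOE !ffunE sigmaOE mulAZl phiC. Qed.

Lemma sigmaOK : involutive sigma.
Proof.
by move=> x; apply/ffunP => -[k l]; rewrite !sigmaOE scalerA Rmx_mul_sym scale1r.
Qed.

Section Derivation.
Variable d : A -> Omega1.
Hypothesis d_is_dA : is_dA theta d.
Local Notation nabla := (nablaO theta d).

Lemma dD a b : d (a + b) = d a + d b.
Proof. by case: d_is_dA. Qed.

Lemma dZ c a : d (c *: a) = c *: d a.
Proof. by case: d_is_dA. Qed.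

Lemma dM a b k : d (mulA a b) k = mulA (d a k) (phi k b) + mulA a (d b k).
Proof. by case: d_is_dA => _ _ _ ->; rewrite !ffunE. Qed.

Lemma d1 : d 1 = 0.
Proof.
apply/ffunP => k; rewrite ffunE; apply/(addrI (d 1 k)).
by rewrite addr0 -[in RHS](mulA1l 1) dM phi1 mulA1l mulA1r.
Qed.

Lemma d_phi l a k : d (phi l a) k = R k l *: phi l (d a k).
Proof.
elim/A_ind: a k => [|i|c a IHa|a b IHa IHb|a b IHa IHb] k.
- by rewrite phi1 d1 ffunE phi0 scaler0.
- case: d_is_dA => _ _ dz_zA _.
  rewrite phiX dZ phi_evU dz_zA !ffunE.
  by case: eqP => [->|_]; rewrite ?phi1 ?phi0 ?scaler0.
- by rewrite phiZ dZ ffunE IHa dZ ffunE phiZ !scalerA mulrC.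
- by rewrite phiD dD ffunE IHa IHb dD ffunE phiD scalerDr.
- by rewrite phiM dM IHa IHb mulAZl mulAZr dM phiD !phiM scalerDr phiC.
Qed.

Lemma nablaOD v w : nabla (v + w) = nabla v + nabla w.
Proof. by apply/ffunP => -[k l]; rewrite ffunE !nablaOE ffunE dD ffunE. Qed.

Lemma nablaOZ c v : nabla (c *: v) = c *: nabla v.
Proof. by apply/ffunP => -[k l]; rewrite ffunE !nablaOE ffunE dZ ffunE. Qed.

Lemma nablaO_lact1 a v : nabla (lact1 a v) = lact2 a (nabla v) + tens (d a) v.
Proof. by apply/ffunP => -[k l]; rewrite nablaOE ffunE dM !ffunE nablaOE addrC. Qed.

Lemma nablaO_ract1 v a :
  nabla (ract1 v a) = ract2 (nabla v) a + sigma (tens v (d a)).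
Proof.
apply/ffunP => -[k l].
by rewrite nablaOE ffunE dM d_phi !ffunE nablaOE sigmaOE ffunE mulAZr.
Qed.

End Derivation.

End TwistedAlgebra.

Theorem lemma4p3 (theta : Rdefinitions.R) (d : A -> Omega1) :
  is_dA theta d ->
  bimodule_connection theta d (nablaO theta d) (sigmaO theta).
Proof.
move=> d_is_dA; split.
- by split; [exact: nablaOD | exact: nablaOZ].
- split; [exact: sigmaOD | exact: sigmaO_lact2 | exact: sigmaO_ract2 |].
  exact/inv_bij/sigmaOK.
- exact: nablaO_lact1.
- exact: nablaO_ract1.
Qed.
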